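(* Let $\mathcal{A}$ and $\mathcal{U}$ be Banach algebras, $\theta$ a nonzero character on $\mathcal{A}$, and $\mathcal{X}$ a simple Banach $(\mathcal{A}\times_{\theta}\mathcal{U})$-bimodule. Let $D:\mathcal{A}\times_{\theta}\mathcal{U}\to\mathcal{X}$ be a derivation and $\delta_1(a)=D((a,0))$. Then either $\delta_1$ is continuous or $\mathrm{ann}_{\mathcal{X}}\mathcal{U}=\mathcal{X}$.
   Context: The Lau product $\mathcal{A}\times_{\theta}\mathcal{U}$ is $\mathcal{A}\times\mathcal{U}$ with norm $\|(a,u)\|=\|a\|+\|u\|$ and product $(a,u)(a',u')=(aa',\theta(a)u'+\theta(a')u+uu')$. $\mathcal{X}$ is an $\mathcal{A}$-bimodule via $ax=(a,0)x$, $xa=x(a,0)$ and a $\mathcal{U}$-bimodule via $ux=(0,u)x$, $xu=x(0,u)$. Simple means the only closed $(\mathcal{A}\times_{\theta}\mathcal{U})$-subbimodules of $\mathcal{X}$ are $\{0\}$ and $\mathcal{X}$. $\mathrm{ann}_{\mathcal{X}}\mathcal{U}=\{x: ux=xu=0\ \forall u\in\mathcal{U}\}$. *)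

From HB Require Import structures.
From mathcomp Require Import all_boot all_order all_algebra.
From mathcomp Require Import all_classical all_reals all_analysis.
From mathcomp Require Import complex.
Set Implicit Arguments. Unset Strict Implicit. Unset Printing Implicit Defensive.
Import Order.TTheory GRing.Theory Num.Theory.
Local Open Scope ring_scope.
Local Open Scope complex_scope.
Local Open Scope classical_set_scope.

Section Defs.
Variable R : realType.
Local Notation C := (R[i]).

Definition is_banach_algebra (A : completeNormedModType C) (mul : A -> A -> A) : Prop :=
  [/\ (forall a b c, mul a (mul b c) = mul (mul a b) c),
      (forall (k : C) a b c, mul (k *: a + b) c = k *: mul a c + mul b c),
      (forall (k : C) a b c, mul a (k *: b + c) = k *: mul a b + mul a c)
    & (forall a b, `|mul a b| <= `|a| * `|b|)].

(* A character: a nonzero(-ness is stated separately) multiplicative linear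
   functional A -> C. *)
Definition is_character (A : completeNormedModType C) (mul : A -> A -> A)
    (theta : A -> C) : Prop :=
  (forall (k : C) a b, theta (k *: a + b) = k * theta a + theta b) /\
  (forall a b, theta (mul a b) = theta a * theta b).

Definition lau_mul (A U : completeNormedModType C) (mulA : A -> A -> A)
    (mulU : U -> U -> U) (theta : A -> C) (p q : A * U) : A * U :=
  (mulA p.1 q.1, theta p.1 *: q.2 + theta q.1 *: p.2 + mulU p.2 q.2).

Definition lau_norm (A U : completeNormedModType C) (p : A * U) : C :=
  `|p.1| + `|p.2|.

Definition lau_lin (A U : completeNormedModType C) (k : C) (p q : A * U) : A * U :=
  (k *: p.1 + q.1, k *: p.2 + q.2).

Definition is_banach_bimodule (A U : completeNormedModType C)
    (mulA : A -> A -> A) (mulU : U -> U -> U) (theta : A -> C)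
    (X : completeNormedModType C)
    (lact : A * U -> X -> X) (ract : X -> A * U -> X) : Prop :=
  let m := lau_mul mulA mulU theta in
  [/\ (forall (k : C) p q x, lact (lau_lin k p q) x = k *: lact p x + lact q x),
      (forall (k : C) p x y, lact p (k *: x + y) = k *: lact p x + lact p y),
      (forall (k : C) p q x, ract x (lau_lin k p q) = k *: ract x p + ract x q)
    & (forall (k : C) p x y, ract (k *: x + y) p = k *: ract x p + ract y p)] /\
  [/\ (forall p q x, lact (m p q) x = lact p (lact q x)),
      (forall p q x, ract x (m p q) = ract (ract x p) q),
      (forall p q x, ract (lact p x) q = lact p (ract x q))
    & exists M : C, forall p x,
        `|lact p x| <= M * (lau_norm p * `|x|) /\
        `|ract x p| <= M * (lau_norm p * `|x|)].

Definition is_subbimodule (A U X : completeNormedModType C)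
    (lact : A * U -> X -> X) (ract : X -> A * U -> X) (S : set X) : Prop :=
  [/\ S 0,
      (forall (k : C) x y, S x -> S y -> S (k *: x + y)),
      (forall p x, S x -> S (lact p x))
    & (forall p x, S x -> S (ract x p))].

Definition is_simple_bimodule (A U X : completeNormedModType C)
    (lact : A * U -> X -> X) (ract : X -> A * U -> X) : Prop :=
  forall S : set X, closed S -> is_subbimodule lact ract S ->
    S = [set 0] \/ S = setT.

Definition is_derivation (A U : completeNormedModType C)
    (mulA : A -> A -> A) (mulU : U -> U -> U) (theta : A -> C)
    (X : completeNormedModType C)
    (lact : A * U -> X -> X) (ract : X -> A * U -> X) (D : A * U -> X) : Prop :=
  (forall (k : C) p q, D (lau_lin k p q) = k *: D p + D q) /\
  (forall p q, D (lau_mul mulA mulU theta p q) = lact p (D q) + ract (D p) q).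

Definition ann_U (A U X : completeNormedModType C)
    (lact : A * U -> X -> X) (ract : X -> A * U -> X) : set X :=
  [set x | forall u : U, lact (0, u) x = 0 /\ ract x (0, u) = 0].

End Defs.

(* The annihilator of U in X is a closed sub-bimodule, hence it is {0} or X.
   Suppose it is {0}.  For a derivation D the identities
     (0,v) D(a,0) = theta(a) D(0,v) - D(0,v) (a,0),
     D(a,0) (0,v) = theta(a) D(0,v) - (a,0) D(0,v)
   show that if a_n -> 0 and D(a_n,0) -> y then y is annihilated by U, because
   characters are contractive and hence theta(a_n) -> 0.  So y = 0: the map
   a |-> D(a,0) has closed graph, and the closed graph theorem (for the
   underlying real Banach spaces) makes it bounded. *)

From HB Require Import structures.
From mathcomp Require Import all_boot all_order all_algebra.
From mathcomp Require Import all_classical all_reals all_analysis.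
From mathcomp Require Import complex.
From mathcomp Require Import ring lra.
Set Implicit Arguments. Unset Strict Implicit. Unset Printing Implicit Defensive.
Import Order.TTheory GRing.Theory Num.Theory.
Import numFieldNormedType.Exports.
Local Open Scope ring_scope.
Local Open Scope complex_scope.
Local Open Scope classical_set_scope.

Section ComplexNorm.
Variable R : realType.
Local Notation C := R[i].

Lemma ler_Re (a b : C) : a <= b -> complex.Re a <= complex.Re b.
Proof. by rewrite lecE => /andP[]. Qed.

Lemma ge0_complexRe (z : C) : 0 <= z -> z = (complex.Re z)%:C.
Proof.
rewrite lecE /= => /andP[/eqP zIm _].
by rewrite [LHS]complexE zIm mulr0 addr0.
Qed.

Lemma Re_mulr_real (z : C) (r : R) : complex.Re (z * r%:C) = complex.Re z * r.
Proof. by case: z => x y; rewrite /= mulr0 subr0. Qed.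

Lemma Re_gt0 (z : C) : 0 < z -> 0 < complex.Re z.
Proof. by rewrite ltcE => /andP[]. Qed.

(* Norms over [R[i]] are complex numbers with zero imaginary part. *)
Definition rnorm (V : normedModType C) (x : V) : R := complex.Re `|x|.

Variable V : normedModType C.
Implicit Types x y : V.

Lemma normr_rnorm x : `|x| = (rnorm x)%:C.
Proof. exact/ge0_complexRe/normr_ge0. Qed.

Lemma rnorm0 : rnorm (0 : V) = 0.
Proof. by rewrite /rnorm normr0. Qed.

Lemma rnorm_ge0 x : 0 <= rnorm x.
Proof. exact: ler_Re (normr_ge0 x). Qed.

Lemma normr_lt x (e : C) : 0 < e -> (`|x| < e) = (rnorm x < complex.Re e).
Proof. by move=> e0; rewrite normr_rnorm [X in _ < X]ge0_complexRe ?ltW // ltcE /= eqxx. Qed.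

Lemma rnormD x y : rnorm (x + y) <= rnorm x + rnorm y.
Proof. by rewrite /rnorm -raddfD; apply/ler_Re/ler_normD. Qed.

Lemma rnormB x y : rnorm (x - y) <= rnorm x + rnorm y.
Proof. by rewrite /rnorm -raddfD; apply/ler_Re/ler_normB. Qed.

Lemma rnormZ (k : C) x : rnorm (k *: x) = complex.Re `|k| * rnorm x.
Proof.
by rewrite /rnorm normrZ (ge0_complexRe (normr_ge0 k)) normr_rnorm -rmorphM.
Qed.

Lemma rnorm_eq0 x : rnorm x = 0 -> x = 0.
Proof. by move=> x0; apply/normr0_eq0; rewrite normr_rnorm x0. Qed.

End ComplexNorm.

Section Realify.
Variable R : realType.
Local Notation C := R[i].
Variable V : normedModType C.

(* The underlying real normed space of [V]: Baire's theorem, hence the closed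
   graph theorem below, is only available over a [realType]. *)
Definition realify : Type := V.

HB.instance Definition _ := GRing.Zmodule.copy realify V.

Definition realify_scale (k : R) (x : realify) : realify := (k%:C *: (x : V) : V).

Lemma realify_scaleA a b (x : realify) :
  realify_scale a (realify_scale b x) = realify_scale (a * b) x.
Proof. by rewrite /realify_scale scalerA rmorphM. Qed.

Lemma realify_scale1 : left_id 1 realify_scale.
Proof. by move=> x; rewrite /realify_scale scale1r. Qed.

Lemma realify_scaleDr : right_distributive realify_scale +%R.
Proof. by move=> a x y; rewrite /realify_scale scalerDr. Qed.

Lemma realify_scaleDl (x : realify) : {morph realify_scale^~ x : a b / a + b}.
Proof. by move=> a b; rewrite /realify_scale rmorphD scalerDl. Qed.

HB.instance Definition _ := GRing.Zmodule_isLmodule.Build R realify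
  realify_scaleA realify_scale1 realify_scaleDr realify_scaleDl.

Definition realify_norm (x : realify) : R := rnorm (x : V).

Lemma realify_normD (x y : realify) :
  realify_norm (x + y) <= realify_norm x + realify_norm y.
Proof. exact: rnormD. Qed.

Lemma realify_normZ (a : R) (x : realify) :
  realify_norm (a *: x) = `|a| * realify_norm x.
Proof.
rewrite /realify_norm /GRing.scale /= /realify_scale rnormZ.
by rewrite normc_def /= expr0n /= addr0 sqrtr_sqr.
Qed.

HB.instance Definition _ := Lmodule_isNormed.Build R realify
  realify_normD realify_normZ (@rnorm_eq0 R V).

Lemma realify_normE (x : realify) : `|x| = rnorm (x : V).
Proof. by []. Qed.

Lemma realify_nbhsE (x : V) : nbhs (x : realify) = nbhs x.
Proof.
rewrite funeqE => P; rewrite propeqE; split.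
  move=> /nbhs_ballP[r r0 rP]; apply/nbhs_ballP.
  have r0C : 0 < r%:C by rewrite ltcE /= eqxx.
  by exists r%:C => // y; rewrite -ball_normE /= normr_lt //= => xy; apply: rP.
move=> /nbhs_ballP[e e0 eP]; apply/nbhs_ballP; exists (complex.Re e).
  exact: Re_gt0.
move=> y; rewrite -ball_normE /= realify_normE => xy; apply: eP.
by rewrite -ball_normE /= normr_lt.
Qed.

End Realify.

Lemma realify_complete (R : realType) (V : completeNormedModType R[i])
  (F : set_system (realify V)) : ProperFilter F -> cauchy F -> cvg F.
Proof.
move=> FF /cauchyP Fcauchy.
have FV : ProperFilter (F : set_system V) by [].
have /cvg_ex[l Fl] : cvg (F : set_system V).
  apply: (@cauchy_cvg V F FV); apply: cauchy_exP => e e0.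
  have [x Fx] := Fcauchy _ (Re_gt0 e0).
  by exists x; apply: filterS Fx => y; rewrite -!ball_normE /= normr_lt.
by apply/cvg_ex; exists (l : realify V); rewrite /= realify_nbhsE.
Qed.

HB.instance Definition _ (R : realType) (V : completeNormedModType R[i]) :=
  Uniform_isComplete.Build (realify V) (@realify_complete R V).

Lemma bounded_additive_continuous (R : realType) (V W : normedModType R[i])
    (f : V -> W) (M : R) :
  (forall x y, f (x - y) = f x - f y) -> (forall x, rnorm (f x) <= M * rnorm x) ->
  continuous f.
Proof.
move=> fB fM x; apply/cvgrPdist_lt => e e0.
have M1 : 0 < `|M| + 1 by rewrite ltr_wpDl.
have d0 : 0 < complex.Re e / (`|M| + 1) by rewrite divr_gt0 ?Re_gt0.
have d0C : 0 < (complex.Re e / (`|M| + 1))%:C by rewrite ltcE /= eqxx.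
apply/nbhs_ballP; exists (complex.Re e / (`|M| + 1))%:C => // t.
rewrite -ball_normE /= normr_lt //= ltr_pdivlMr // => xt.
rewrite -fB normr_lt //; apply: le_lt_trans (fM _) _.
have := rnorm_ge0 (x - t); have := ler_norm M; nra.
Qed.

Lemma geometric_dominated_series_cvg (R : realType) (V : completeNormedModType R)
    (u : V ^nat) (c q : R) :
  0 < q -> q < 1 -> (forall n, `|u n| <= c * q ^+ n) ->
  exists2 l, series u @ \oo --> l & `|l| <= c / (1 - q).
Proof.
move=> q0 q1 uc.
have q_lt1 : `|q| < 1 by rewrite gtr0_norm.
have c0 : 0 <= c by rewrite -[c]mulr1 -(expr0 q); exact: le_trans (uc 0%N).
have geo0 n : 0 <= geometric c q n := geometric_ge0 n c0 (ltW q0).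
have /normed_cvg useries := series_le_cvg (fun n => normr_ge0 (u n)) geo0 uc
  (is_cvg_geometric_series q_lt1).
exists (limn (series u)) => //.
apply: (cvgr_to_le (cvg_norm useries)); apply: nearW => n.
apply: le_trans (geometric_le_lim n c0 q0 q_lt1).
rewrite /series /= /geometric /=; apply: le_trans (ler_norm_sum _ _ _) _.
by apply: ler_sum => k _.
Qed.

Lemma geometric_dominated_series_cvgC (R : realType) (V : completeNormedModType R[i])
    (u : V ^nat) (c q : R) :
  0 < q -> q < 1 -> (forall n, rnorm (u n) <= c * q ^+ n) ->
  exists l : V, series u @ \oo --> l.
Proof.
move=> q0 q1 uc; have [l ul _] := geometric_dominated_series_cvg (V := realify V) q0 q1 uc.
by exists l; move: ul; rewrite /= realify_nbhsE.
Qed.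

Lemma Baire_ball_in_closure (R : realType) (V : completeNormedModType R)
    (S : nat -> set V) :
  (forall x, exists n, S n x) -> exists n x (r : R), 0 < r /\ ball x r `<=` closure (S n).
Proof.
move=> Scover.
pose O n := ~` closure (S n).
have O_open n : open (O n) by apply: closed_openC; exact: closed_closure.
have O_cap0 : \bigcap_n O n = set0.
  rewrite -subset0 => x Ox; have [n Sx] := Scover x.
  by apply: (Ox n Logic.I); apply: subset_closure.
have [[n /denseNE[W [[x /open_nbhs_nbhs /nbhs_ballP[r r0 rW]] WO0]]]|] :=
  pselect (exists n, ~ dense (O n)); last first.
  move=> /forallNP Odense; have : dense (\bigcap_n O n).
    by apply: Baire => n; split => //; apply: contrapT.
  by rewrite O_cap0 => /(_ setT)[||y []]; [exists 0|exact: openT|].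
exists n, x, r; split => // y /rW Wy.
by apply: contrapT => ncl; have : (W `&` O n) y by []; rewrite WO0.
Qed.

Section ClosedGraph.
Variables (R : realType) (V W : completeNormedModType R).

Lemma closure_approx (S : set V) x e :
  closure S x -> 0 < e -> exists2 s, S s & `|x - s| < e.
Proof.
move=> Sx e0; have [s [Ss xs]] := Sx _ (nbhsx_ballx x e e0).
by exists s; move: xs; rewrite // -ball_normE.
Qed.

Variable T : {linear V -> W}.

(* Some [S n = {a | |T a| <= n}] is dense in a ball B(x, r); approximating
   x + l z and x by points of [S n], with l = r / (2 |z|), gives the bound. *)
Lemma linear_approx_bounded : exists2 c : R, 0 <= c &
  forall z e, 0 < e -> exists a, `|z - a| < e /\ `|T a| <= c * `|z|.
Proof.
pose S n := [set a : V | `|T a| <= n%:R].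
have S_cover a : exists n, S n a.
  by exists (Num.truncn `|T a|).+1; exact/ltW/truncnS_gt.
have [n [x [r [r0 rS]]]] := Baire_ball_in_closure S_cover.
exists (4 * n%:R / r); first by rewrite divr_ge0 ?mulr_ge0 // ltW.
move=> z e e0.
have [->|z0] := eqVneq z 0.
  by exists 0; rewrite subr0 normr0 e0 linear0 normr0 mulr0.
have nz0 : 0 < `|z| by rewrite normr_gt0.
pose l := r / (2 * `|z|).
have l0 : 0 < l by rewrite divr_gt0 // mulr_gt0.
have le0 : 0 < l * e / 2 by rewrite divr_gt0 // mulr_gt0.
have xlz_ball : ball x r (x + l *: z).
  rewrite -ball_normE /= opprD addrA subrr sub0r normrN normrZ gtr0_norm //.
  have -> : l * `|z| = r / 2 by rewrite /l; field; rewrite gt_eqF.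
  lra.
have [s1 S1 s1_near] := closure_approx (rS _ xlz_ball) le0.
have [s2 S2 s2_near] := closure_approx (rS _ (ballxx x r0)) le0.
exists (l^-1 *: (s1 - s2)); split.
  have -> : z - l^-1 *: (s1 - s2) = l^-1 *: ((x + l *: z - s1) - (x - s2)).
    have -> : x + l *: z - s1 - (x - s2) = l *: z - (s1 - s2).
      by rewrite opprB addrC !addrA subrK opprB [RHS]addrA [_ + s2]addrC.
    by rewrite [RHS]scalerBr scalerA mulVf ?gt_eqF // scale1r scalerBr.
  rewrite normrZ normfV gtr0_norm // mulrC ltr_pdivrMr //.
  have := ler_normB (x + l *: z - s1) (x - s2); lra.
rewrite linearZ linearB normrZ normfV gtr0_norm //=.
have := ler_normB (T s1) (T s2); rewrite /S /= in S1 S2 => TsB.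
have -> : 4 * n%:R / r * `|z| = l^-1 * (2 * n%:R) by rewrite /l; field; rewrite !gt_eqF.
rewrite ler_pM2l ?invr_gt0 //; lra.
Qed.

(* For linear maps this is equivalent to the closedness of the graph. *)
Definition sequentially_closed_graph (f : V -> W) :=
  forall (u : nat -> V) (y : W), u @ \oo --> 0 -> f \o u @ \oo --> y -> y = 0.

(* Iterating [linear_approx_bounded] writes z as the sum of a series of a_k with
   |T a_k| <= c 2^-k; the closed graph identifies T z with the sum of the T a_k. *)
Lemma closed_graph_bounded_on_ball : sequentially_closed_graph T ->
  exists2 c : R, 0 <= c & forall z, `|z| < 1 -> `|T z| <= 2 * c.
Proof.
move=> Tgraph; have [c c0 Tapprox] := linear_approx_bounded.
exists c => // z z1.
have half0 : 0 < 2^-1 :> R by lra.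
have half1 : 2^-1 < 1 :> R by lra.
have /choice[g gP] : forall p : V * nat,
    exists a, `|p.1 - a| < 2^-1 ^+ p.2.+1 /\ `|T a| <= c * `|p.1|.
  by move=> [y k]; apply: Tapprox; exact: exprn_gt0.
pose fix rest k := if k is k'.+1 then rest k' - g (rest k', k') else z.
have rest_lt k : `|rest k| < 2^-1 ^+ k.
  by elim: k => [|k IH] /=; [rewrite expr0 | have [] := gP (rest k, k)].
pose a k := g (rest k, k).
have Ta_le k : `|(T \o a) k| <= c * 2^-1 ^+ k.
  have [_ /le_trans] := gP (rest k, k); apply.
  by rewrite /= ler_wpM2l // ltW.
have series_Ta n : series (T \o a) n = T z - T (rest n).
  elim: n => [|n IH]; first by rewrite /series /= big_geq // subrr.
  by rewrite seriesSr IH /= /a linearB opprB addrA addrAC.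
have [l Tal l_le] := geometric_dominated_series_cvg half0 half1 Ta_le.
have rest0 : rest @ \oo --> 0.
  apply: norm_cvg0; apply: (@squeeze_cvgr _ _ _ _ (cst 0) (GRing.exp 2^-1)).
  - by apply: nearW => k; rewrite normr_ge0 ltW.
  - exact: cvg_cst.
  - by apply: cvg_expr; rewrite gtr0_norm.
have Trest : T \o rest @ \oo --> T z - l.
  have -> : T \o rest = (fun n => T z - series (T \o a) n).
    by apply/funext => n /=; rewrite series_Ta opprB addrC subrK.
  exact: cvgB (cvg_cst _) Tal.
have /eqP := Tgraph _ _ rest0 Trest; rewrite subr_eq0 => /eqP ->.
by move: l_le; rewrite (_ : c / (1 - 2^-1) = 2 * c) //; field.
Qed.

Theorem closed_graph_theorem : sequentially_closed_graph T ->
  exists2 M : R, 0 < M & forall x, `|T x| <= M * `|x|.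
Proof.
move=> /closed_graph_bounded_on_ball[c c0 Tball].
exists (4 * c + 1) => [|x]; first lra.
have [->|x0] := eqVneq x 0; first by rewrite linear0 !normr0 mulr0.
have nx : 0 < `|x| by rewrite normr_gt0.
pose w := (2 * `|x|)^-1 *: x.
have w1 : `|w| < 1.
  rewrite /w normrZ normfV gtr0_norm ?mulr_gt0 //.
  rewrite (_ : (2 * `|x|)^-1 * `|x| = 2^-1); first lra.
  by field; rewrite gt_eqF.
have -> : T x = (2 * `|x|) *: T w.
  by rewrite /w linearZ scalerA mulfV ?scale1r // mulf_neq0 // gt_eqF.
rewrite normrZ gtr0_norm ?mulr_gt0 //; have := Tball _ w1; nra.
Qed.

End ClosedGraph.

Section BanachAlgebra.
Variables (R : realType) (A : completeNormedModType R[i]) (mul : A -> A -> A).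
Hypothesis Amul : is_banach_algebra mul.

Lemma bmul0l a : mul 0 a = 0.
Proof. by have [_ mulDl _ _] := Amul; have := mulDl (-1) 0 0 a; rewrite !scaleN1r !addNr. Qed.

Lemma bmulDr a x y : mul a (x + y) = mul a x + mul a y.
Proof. by have [_ _ mulDr _] := Amul; have := mulDr 1 a x y; rewrite !scale1r. Qed.

Lemma bmulBr a x y : mul a (x - y) = mul a x - mul a y.
Proof.
have [_ _ mulDr _] := Amul.
by rewrite addrC -scaleN1r mulDr scaleN1r addrC.
Qed.

Lemma bmul0r a : mul a 0 = 0.
Proof. by have := bmulBr a 0 0; rewrite !subrr. Qed.

Lemma rnorm_bmul a b : rnorm (mul a b) <= rnorm a * rnorm b.
Proof.
have [_ _ _ /(_ a b)] := Amul.
by rewrite normr_rnorm (normr_rnorm a) (normr_rnorm b) -rmorphM lecR.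
Qed.

Lemma bmul_continuous a : continuous (mul a).
Proof. exact: bounded_additive_continuous (bmulBr a) (rnorm_bmul a). Qed.

Variable theta : A -> R[i].
Hypothesis theta_char : is_character mul theta.

Lemma characterB x y : theta (x - y) = theta x - theta y.
Proof.
have [thetaL _] := theta_char.
by rewrite addrC -scaleN1r thetaL mulN1r addrC.
Qed.

Lemma character0 : theta 0 = 0.
Proof. by have := characterB 0 0; rewrite !subrr. Qed.

Lemma characterZ k x : theta (k *: x) = k * theta x.
Proof.
have [thetaL _] := theta_char.
by have := thetaL k x 0; rewrite !addr0 character0 addr0.
Qed.

Lemma characterM x y : theta (mul x y) = theta x * theta y.
Proof. by case: theta_char. Qed.

(* Otherwise b = a / theta a has |b| < 1 and theta b = 1, and the sum s of the
   b^(n+1) satisfies b s = s - b, whence theta s = theta s - 1. *)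
Lemma character_contractive a : complex.Re `|theta a| <= rnorm a.
Proof.
rewrite leNgt; apply/negP => a_lt.
have theta_a0 : theta a != 0.
  by apply: contraTneq a_lt => ->; rewrite normr0 -leNgt rnorm_ge0.
have theta_a_gt0 : 0 < complex.Re `|theta a| := le_lt_trans (rnorm_ge0 a) a_lt.
pose b := (theta a)^-1 *: a.
have theta_b : theta b = 1 by rewrite characterZ mulVf.
have b_gt0 : 0 < rnorm b.
  rewrite lt_neqAle rnorm_ge0 andbT eq_sym; apply/eqP => /rnorm_eq0 b0.
  by move: theta_b; rewrite b0 character0 => /eqP; rewrite eq_sym oner_eq0.
have b_lt1 : rnorm b < 1.
  rewrite rnormZ normfV (ge0_complexRe (normr_ge0 (theta a))) -fmorphV /=.
  by rewrite mulrC ltr_pdivrMr // mul1r.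
pose fix pw n := if n is n'.+1 then mul b (pw n') else b.
have pw_le n : rnorm (pw n) <= rnorm b * rnorm b ^+ n.
  elim: n => [|n IH]; first by rewrite expr0 mulr1.
  apply: le_trans (rnorm_bmul _ _) _.
  by rewrite exprS mulrCA ler_wpM2l ?rnorm_ge0 // mulrC.
have [s pw_s] := geometric_dominated_series_cvgC b_gt0 b_lt1 pw_le.
have mul_b_series n : mul b (series pw n) = series pw n.+1 - b.
  elim: n => [|n IH]; first by rewrite /series /= !big_nat1 ?big_geq // bmul0r subrr.
  by rewrite [in LHS]seriesSr bmulDr IH [series pw n.+2]seriesSr addrAC.
have mul_b_s : mul b s = s - b.
  have lim_mul : mul b \o series pw @ \oo --> mul b s.
    exact: cvg_comp pw_s (@bmul_continuous b s).
  have lim_shift : mul b \o series pw @ \oo --> s - b.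
    rewrite (_ : mul b \o series pw = fun n => series pw n.+1 - b).
      have shift_s : [sequence series pw n.+1]_n @ \oo --> s by rewrite cvg_shiftS.
      exact: cvgB shift_s (cvg_cst b).
    exact/funext/mul_b_series.
  exact: cvg_unique lim_mul lim_shift.
move/(congr1 theta): mul_b_s; rewrite characterM characterB theta_b mul1r.
by move/eqP; rewrite -subr_eq0 opprB addrC subrK oner_eq0.
Qed.

End BanachAlgebra.

Section LauBimodule.
Variables (R : realType) (A U X : completeNormedModType R[i]).
Variables (mulA : A -> A -> A) (mulU : U -> U -> U) (theta : A -> R[i]).
Variables (lact : A * U -> X -> X) (ract : X -> A * U -> X).
Hypotheses (Amul : is_banach_algebra mulA) (Umul : is_banach_algebra mulU).
Hypothesis theta_char : is_character mulA theta.
Hypothesis Xbimod : is_banach_bimodule mulA mulU theta lact ract.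

Local Notation lau_mul := (lau_mul mulA mulU theta).

Lemma lau_mul0l u p : lau_mul (0, u) p = (0, theta p.1 *: u + mulU u p.2).
Proof. by rewrite /lau_mul /= (bmul0l Amul) (character0 theta_char) scale0r add0r. Qed.

Lemma lau_mulr0 u p : lau_mul p (0, u) = (0, theta p.1 *: u + mulU p.2 u).
Proof. by rewrite /lau_mul /= (bmul0r Amul) (character0 theta_char) scale0r addr0. Qed.

Lemma lactB p x y : lact p (x - y) = lact p x - lact p y.
Proof.
have [[_ lactD _ _] _] := Xbimod.
by rewrite addrC -scaleN1r lactD scaleN1r addrC.
Qed.

Lemma ractB p x y : ract (x - y) p = ract x p - ract y p.
Proof.
have [[_ _ _ ractD] _] := Xbimod.
by rewrite addrC -scaleN1r ractD scaleN1r addrC.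
Qed.

Lemma lact0 p : lact p 0 = 0.
Proof. by have := lactB p 0 0; rewrite !subrr. Qed.

Lemma ract0 p : ract 0 p = 0.
Proof. by have := ractB p 0 0; rewrite !subrr. Qed.

Lemma bimodule_action_bound : exists K : R, forall p x,
  rnorm (lact p x) <= K * ((rnorm p.1 + rnorm p.2) * rnorm x) /\
  rnorm (ract x p) <= K * ((rnorm p.1 + rnorm p.2) * rnorm x).
Proof.
have [_ [_ _ _ [M actM]]] := Xbimod.
exists (complex.Re M) => p x; have [lactM ractM] := actM p x.
have lau_normE : lau_norm p * `|x| = ((rnorm p.1 + rnorm p.2) * rnorm x)%:C.
  by rewrite /lau_norm !normr_rnorm -rmorphD -rmorphM.
by move: lactM ractM; rewrite lau_normE => /ler_Re + /ler_Re; rewrite !Re_mulr_real.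
Qed.

Lemma lact_continuous p : continuous (lact p).
Proof.
have [K actK] := bimodule_action_bound.
apply: (bounded_additive_continuous (M := K * (rnorm p.1 + rnorm p.2))) (lactB p) _.
by move=> x; rewrite -mulrA; case: (actK p x).
Qed.

Lemma ract_continuous p : continuous (ract^~ p).
Proof.
have [K actK] := bimodule_action_bound.
apply: (bounded_additive_continuous (M := K * (rnorm p.1 + rnorm p.2))) (ractB p) _.
by move=> x; rewrite -mulrA; case: (actK p x).
Qed.

Lemma ann_U_subbimodule : is_subbimodule lact ract (ann_U lact ract).
Proof.
have [[_ lactD _ ractD] [lactM ractM lractA _]] := Xbimod.
split.
- by move=> u; rewrite lact0 ract0.
- move=> k x y xU yU u; have [lx rx] := xU u; have [ly ry] := yU u.
  by rewrite lactD ractD lx rx ly ry scaler0 addr0.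
- move=> p x xU u; split; last by rewrite lractA (proj2 (xU u)) lact0.
  by rewrite -lactM lau_mul0l (proj1 (xU _)).
- move=> p x xU u; split; first by rewrite -lractA (proj1 (xU u)) ract0.
  by rewrite -ractM lau_mulr0 (proj2 (xU _)).
Qed.

Lemma ann_U_closed : closed (ann_U lact ract).
Proof.
have kernel_closed (f : X -> X) : continuous f -> closed (f @^-1` [set 0]).
  move=> f_cont; apply: preimage_closed => [x _|]; first exact: f_cont.
  exact/accessible_closed_set1/hausdorff_accessible/norm_hausdorff.
move=> x xU u; split.
  apply: (kernel_closed _ (@lact_continuous (0, u))).
  by apply: closureS xU => y /(_ u)[].
apply: (kernel_closed _ (@ract_continuous (0, u))).
by apply: closureS xU => y /(_ u)[].
Qed.

Lemma lactBA a b x : lact (a - b, 0) x = lact (a, 0) x - lact (b, 0) x.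
Proof.
have [[lactL _ _ _] _] := Xbimod; have := lactL (-1) (b, 0) (a, 0) x.
by rewrite /lau_lin /= scaler0 addr0 !scaleN1r addrC => ->; rewrite addrC.
Qed.

Lemma ractBA a b x : ract x (a - b, 0) = ract x (a, 0) - ract x (b, 0).
Proof.
have [[_ _ ractL _] _] := Xbimod; have := ractL (-1) (b, 0) (a, 0) x.
by rewrite /lau_lin /= scaler0 addr0 !scaleN1r addrC => ->; rewrite addrC.
Qed.

Lemma character_scale_sub_continuous (f : A -> X) (K : R) w :
  (forall a b, f (a - b) = f a - f b) -> (forall a, rnorm (f a) <= K * rnorm a) ->
  continuous (fun a => theta a *: w - f a).
Proof.
move=> fB fK; apply: (bounded_additive_continuous (M := rnorm w + K)).
  move=> a b; rewrite (characterB theta_char) scalerBl fB.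
  by rewrite !opprB addrACA [RHS]addrACA (addrC (- _)).
move=> a; apply: le_trans (rnormB _ _) _; rewrite rnormZ mulrDl.
apply: lerD (fK a); rewrite mulrC ler_wpM2l ?rnorm_ge0 //.
exact: (character_contractive Amul theta_char).
Qed.

Variable D : A * U -> X.
Hypothesis Dder : is_derivation mulA mulU theta lact ract D.

Lemma derivation_linearA k x y : D (k *: x + y, 0) = k *: D (x, 0) + D (y, 0).
Proof.
have [Dlin _] := Dder.
by have := Dlin k (x, 0) (y, 0); rewrite /lau_lin /= scaler0 addr0.
Qed.

Lemma derivationBA x y : D (x - y, 0) = D (x, 0) - D (y, 0).
Proof. by rewrite addrC -scaleN1r derivation_linearA scaleN1r addrC. Qed.

Lemma derivation_scaleU k v : D (0, k *: v) = k *: D (0, v).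
Proof.
have [Dlin _] := Dder.
have D00 : D (0, 0) = 0.
  by have := Dlin (-1) (0, 0) (0, 0); rewrite /lau_lin /= !scaleN1r !addNr.
by have := Dlin k (0, v) (0, 0); rewrite /lau_lin /= scaler0 !addr0 D00 addr0.
Qed.

Lemma lact_U_derivation a v :
  lact (0, v) (D (a, 0)) = theta a *: D (0, v) - ract (D (0, v)) (a, 0).
Proof.
have [_ Dmul] := Dder; have := Dmul (0, v) (a, 0).
by rewrite lau_mul0l /= (bmul0r Umul) addr0 derivation_scaleU => ->; rewrite addrK.
Qed.

Lemma ract_U_derivation a v :
  ract (D (a, 0)) (0, v) = theta a *: D (0, v) - lact (a, 0) (D (0, v)).
Proof.
have [_ Dmul] := Dder; have := Dmul (a, 0) (0, v).
by rewrite lau_mulr0 /= (bmul0l Umul) addr0 derivation_scaleU => ->; rewrite addrC addKr.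
Qed.

Lemma separating_space_sub_ann_U (u : nat -> A) (y : X) :
  u @ \oo --> 0 -> (fun n => D (u n, 0)) @ \oo --> y -> ann_U lact ract y.
Proof.
move=> u0 Du_y v; set w := D (0, v).
have [K actK] := bimodule_action_bound.
have character_scale_sub_to0 (f : A -> X) (M : R) :
    (forall a b, f (a - b) = f a - f b) -> (forall a, rnorm (f a) <= M * rnorm a) ->
    (fun n => theta (u n) *: w - f (u n)) @ \oo --> 0.
  move=> fB fM; have f0 : f 0 = 0 by rewrite -(subrr 0) fB subrr.
  have := cvg_comp _ _ u0 (@character_scale_sub_continuous f M w fB fM 0).
  by rewrite /= (character0 theta_char) scale0r f0 subrr.
have action_boundA (f : A -> X) :
    (forall a, rnorm (f a) <= K * ((rnorm a + rnorm (0 : U)) * rnorm w)) ->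
    forall a, rnorm (f a) <= K * rnorm w * rnorm a.
  by move=> fK a; rewrite mulrAC -mulrA -[rnorm a]addr0 -(rnorm0 U); apply: fK.
split.
  have lim_y := cvg_comp _ _ Du_y (@lact_continuous (0, v) y).
  have lim_0 : lact (0, v) \o (fun n => D (u n, 0)) @ \oo --> 0.
    rewrite (_ : _ \o _ = fun n => theta (u n) *: w - ract w (u n, 0)).
      apply: (character_scale_sub_to0 _ (K * rnorm w) (fun a b => ractBA a b w)).
      by apply: action_boundA => a; case: (actK (a, 0) w).
    by apply/funext => n; exact: lact_U_derivation.
  exact: cvg_unique lim_y lim_0.
have lim_y := cvg_comp _ _ Du_y (@ract_continuous (0, v) y).
have lim_0 : ract^~ (0, v) \o (fun n => D (u n, 0)) @ \oo --> 0.
  rewrite (_ : _ \o _ = fun n => theta (u n) *: w - lact (u n, 0) w).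
    apply: (character_scale_sub_to0 _ (K * rnorm w) (fun a b => lactBA a b w)).
    by apply: action_boundA => a; case: (actK (a, 0) w).
  by apply/funext => n; exact: ract_U_derivation.
exact: cvg_unique lim_y lim_0.
Qed.

End LauBimodule.

Theorem theorem2p8 (R : realType)
  (A U : completeNormedModType R[i])
  (mulA : A -> A -> A) (mulU : U -> U -> U) (theta : A -> R[i])
  (X : completeNormedModType R[i])
  (lact : A * U -> X -> X) (ract : X -> A * U -> X) (D : A * U -> X) :
  is_banach_algebra mulA -> is_banach_algebra mulU ->
  is_character mulA theta -> (exists a : A, theta a != 0) ->
  is_banach_bimodule mulA mulU theta lact ract ->
  is_simple_bimodule lact ract ->
  is_derivation mulA mulU theta lact ract D ->
  continuous (fun a : A => D (a, 0)) \/ ann_U lact ract = setT.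
Proof.
(* The argument does not need theta to be nonzero. *)
move=> Amul Umul theta_char _ Xbimod Xsimple Dder.
have [ann0|] := Xsimple _ (ann_U_closed Xbimod)
  (ann_U_subbimodule Amul theta_char Xbimod); [left | by right].
have delta_linear : linear (fun x : realify A => D (x, 0) : realify X).
  by move=> k x y; exact: (derivation_linearA Dder).
pose delta : {linear realify A -> realify X} :=
  HB.pack (fun x : realify A => D (x, 0) : realify X)
    (GRing.isLinear.Build _ _ _ _ _ delta_linear).
have delta_graph : sequentially_closed_graph delta.
  move=> u y; rewrite /= !realify_nbhsE => u0 Du_y.
  have := separating_space_sub_ann_U Amul Umul theta_char Xbimod Dder u0 Du_y.
  by rewrite ann0.
have [M _ deltaM] := closed_graph_theorem delta_graph.
exact: bounded_additive_continuous (derivationBA Dder) deltaM.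
Qed.
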